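(* Let $\mu\in (-1,1)$ and $$\tilde{M} = \begin{pmatrix} 1 & i\mu \\ -i\mu & 1 \end{pmatrix}.$$ Then for every $k\in \mathbb{N}$, $\lambda_{\min}\big(\mathrm{Re}(\tilde{M}^{\otimes k})\big) \ge (1-\mu^2)^{k/2}$.
   Context: $\tilde M^{\otimes k}$ is the $k$-fold Kronecker (tensor) power, $\mathrm{Re}(\cdot)$ denotes the entrywise real part of a complex matrix (which here is a real symmetric matrix), and $\lambda_{\min}$ denotes the smallest eigenvalue. *)

From HB Require Import structures.
From mathcomp Require Import all_boot all_order all_algebra.
From mathcomp Require Import polyrcf complex mxtens.
Set Implicit Arguments. Unset Strict Implicit. Unset Printing Implicit Defensive.
Import Order.TTheory GRing.Theory Num.Theory.
Local Open Scope ring_scope.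

Definition Mtilde (R : rcfType) (mu : R) : 'M[R[i]]_2 :=
  \matrix_(a < 2, b < 2)
    (if a == b then 1
     else if (a == 0 :> 'I_2) then ('i * mu%:C)%C else (- ('i * mu%:C))%C).

Fixpoint kron_pow (R : pzRingType) (M : 'M[R]_2) (k : nat) : 'M[R]_(2 ^ k) :=
  match k return 'M[R]_(2 ^ k) with
  | 0 => 1%:M
  | k'.+1 => castmx (esym (expnS 2 k'), esym (expnS 2 k')) (M *t kron_pow M k')
  end.

Definition Re_mx (R : rcfType) (m n : nat) (A : 'M[R[i]]_(m, n)) : 'M[R]_(m, n) :=
  map_mx (@complex.Re R) A.

(* Smallest eigenvalue: the least real root of the characteristic polynomial
   (rootsR lists all real roots in increasing order). *)
Definition lambda_min (R : rcfType) (n : nat) (A : 'M[R]_n) : R :=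
  head 0 (rootsR (char_poly A)).

From HB Require Import structures.
From mathcomp Require Import all_boot all_order all_algebra.
From mathcomp Require Import polyrcf complex mxtens.
From mathcomp Require Import ring lra.
Set Implicit Arguments. Unset Strict Implicit. Unset Printing Implicit Defensive.
Import Order.TTheory GRing.Theory Num.Theory.
Local Open Scope ring_scope.

(* Let H be the k-th Kronecker power of M~, Hb its entrywise conjugate and
   c := (1 - mu^2)^(k/2).  Then H is Hermitian, H Hb = Hb H = c^2 I, and Hb is
   positive semidefinite, being the k-th power of the conjugate of M~, which
   has a Cholesky factorisation.  Expanding gives the matrix AM-GM identity
     (H - c) Hb (H - c) = c^2 (H + Hb) - 2 c^3,
   where H + Hb = 2 Re H.  Evaluating this nonnegative form at a real
   eigenvector v of Re H with eigenvalue l gives 2 c^2 (l - c) |v|^2 >= 0.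
   Since Re H is real symmetric its spectrum is real and nonempty, so the
   least eigenvalue is such an l. *)

Lemma castmx_mulmx (R : pzRingType) n n' (e : n = n') (A B : 'M[R]_n) :
  castmx (e, e) A *m castmx (e, e) B = castmx (e, e) (A *m B).
Proof. by case: n' / e; rewrite !castmx_id. Qed.

Lemma castmx_scalar (R : pzRingType) n n' (e : n = n') (a : R) :
  castmx (e, e) (a%:M : 'M_n) = a%:M.
Proof. by case: n' / e; rewrite castmx_id. Qed.

Lemma tensmx_scalar (R : pzRingType) m n (a b : R) :
  (a%:M : 'M_m) *t (b%:M : 'M_n) = (a * b)%:M.
Proof.
apply/matrixP=> i j.
case: (mxtens_indexP i) => i0 i1; case: (mxtens_indexP j) => j0 j1.
rewrite tensmxE !mxE (inj_eq (can_inj (@mxtens_indexK _ _))) xpair_eqE.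
by case: (i0 == j0); case: (i1 == j1); rewrite ?mulr1n ?mulr0n ?mulr0 ?mul0r.
Qed.

Section KronPow.
Variable R : comPzRingType.

Lemma kron_pow_mul (M N : 'M[R]_2) k :
  kron_pow M k *m kron_pow N k = kron_pow (M *m N) k.
Proof.
elim: k => [|k IH] /=; first by rewrite mul1mx.
by rewrite castmx_mulmx tensmx_mul IH.
Qed.

Lemma kron_pow_scalar (a : R) k : kron_pow a%:M k = (a ^+ k)%:M.
Proof.
elim: k => [|k IH] /=; first by rewrite expr0.
by rewrite IH tensmx_scalar -exprS castmx_scalar.
Qed.

Lemma tr_kron_pow (M : 'M[R]_2) k : (kron_pow M k)^T = kron_pow M^T k.
Proof.
elim: k => [|k IH] /=; first by rewrite tr_scalar_mx.
by rewrite trmx_cast trmx_tens IH.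
Qed.

End KronPow.

Lemma map_kron_pow (aR rR : comPzRingType) (f : {rmorphism aR -> rR})
    (M : 'M[aR]_2) k :
  map_mx f (kron_pow M k) = kron_pow (map_mx f M) k.
Proof.
elim: k => [|k IH] /=; first by rewrite map_scalar_mx rmorph1.
by rewrite map_castmx map_mxT IH.
Qed.

Section ConjugateTranspose.
Variable R : rcfType.
Local Notation C := R[i].
Local Open Scope complex_scope.

Definition ctrmx m n (X : 'M[C]_(m, n)) : 'M[C]_(n, m) := (map_mx conjc X)^T.

Lemma ctrmxM m n p (X : 'M[C]_(m, n)) (Y : 'M[C]_(n, p)) :
  ctrmx (X *m Y) = ctrmx Y *m ctrmx X.
Proof. by rewrite /ctrmx map_mxM trmx_mul. Qed.

Lemma ctrmxK m n (X : 'M[C]_(m, n)) : ctrmx (ctrmx X) = X.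
Proof. by apply/matrixP=> i j; rewrite !mxE conjcK. Qed.

Lemma ctrmxB m n (X Y : 'M[C]_(m, n)) : ctrmx (X - Y) = ctrmx X - ctrmx Y.
Proof. by apply/matrixP=> i j; rewrite !mxE rmorphB. Qed.

Lemma ctrmx_real_scalar n (a : R) : ctrmx (a%:C%:M : 'M[C]_n) = a%:C%:M.
Proof. by rewrite /ctrmx map_scalar_mx /= oppr0 tr_scalar_mx. Qed.

Lemma ctrmx_kron_pow (M : 'M[C]_2) k :
  ctrmx (kron_pow M k) = kron_pow (ctrmx M) k.
Proof. by rewrite /ctrmx map_kron_pow tr_kron_pow. Qed.

Lemma conj_ctrmx11 (Y : 'M[C]_1) : ctrmx Y = Y -> (Y 0 0)^* = Y 0 0.
Proof. by move/matrixP/(_ 0 0); rewrite !mxE. Qed.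

Lemma dot_self_ge0 n (u : 'rV[C]_n) : 0 <= (u *m ctrmx u) 0 0.
Proof. by rewrite mxE; apply: sumr_ge0 => j _; rewrite !mxE mulcJ_ge0. Qed.

Lemma dot_self_eq0 n (u : 'rV[C]_n) : ((u *m ctrmx u) 0 0 == 0) = (u == 0).
Proof.
apply/idP/eqP=> [|->]; last by rewrite mul0mx mxE.
have uu_ge0 (j : 'I_n) : true -> 0 <= u 0 j * (ctrmx u) j 0.
  by move=> _; rewrite !mxE mulcJ_ge0.
rewrite mxE => /eqP /(psumr_eq0P uu_ge0) uu0.
apply/rowP=> j; have /eqP := uu0 j isT.
by rewrite !mxE mulf_eq0 conjc_eq0 orbb => /eqP.
Qed.

Definition psdmx n (P : 'M[C]_n) : Prop :=
  forall u : 'rV_n, 0 <= (u *m P *m ctrmx u) 0 0.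

Lemma psdmx_gram m n (K : 'M[C]_(m, n)) : psdmx (ctrmx K *m K).
Proof.
move=> u; have := dot_self_ge0 (u *m ctrmx K).
by rewrite ctrmxM ctrmxK !mulmxA.
Qed.

Lemma hermitian_eigenvalue_real n (X : 'M[C]_n) a :
  ctrmx X = X -> eigenvalue X a -> a^* = a.
Proof.
move=> hX /eigenvalueP [w hw w_neq0].
have hwXw : ctrmx (w *m X *m ctrmx w) = w *m X *m ctrmx w.
  by rewrite !ctrmxM ctrmxK hX mulmxA.
have hww : ctrmx (w *m ctrmx w) = w *m ctrmx w by rewrite ctrmxM ctrmxK.
have ww_neq0 : (w *m ctrmx w) 0 0 != 0 by rewrite dot_self_eq0.
have := conj_ctrmx11 hwXw.
rewrite hw -scalemxAl mxE rmorphM /= (conj_ctrmx11 hww).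
exact: mulIf.
Qed.

Lemma Re_mx_sym n (H : 'M[C]_n) : ctrmx H = H -> (Re_mx H)^T = Re_mx H.
Proof.
move=> hH; apply/matrixP=> i j; have /matrixP/(_ i j) := hH.
by rewrite !mxE => <-; case: (H j i).
Qed.

Lemma addmx_conj m n (H : 'M[C]_(m, n)) :
  H + map_mx conjc H = 2%:R *: map_mx (real_complex R) (Re_mx H).
Proof. by apply/matrixP=> i j; rewrite !mxE addcJ. Qed.

Lemma symmetric_eigenvalue_exists n (A : 'M[R]_n) :
  (0 < n)%N -> A^T = A -> exists l, eigenvalue A l.
Proof.
move=> n_gt0 hA; pose AC := map_mx (real_complex R) A.
have hAC : ctrmx AC = AC.
  by apply/matrixP=> i j; rewrite !mxE conjc_real -[in RHS]hA !mxE.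
have [[x y] ACxy] := eigenvalue_closed AC n_gt0.
have [Ny_eq_y] : x -i* y = x +i* y := hermitian_eigenvalue_real hAC ACxy.
have y0 : y = 0 by lra.
by exists x; rewrite -(eigenvalue_map (real_complex R)); rewrite y0 in ACxy.
Qed.

End ConjugateTranspose.

Lemma lambda_min_eigenvalue (R : rcfType) n (A : 'M[R]_n) l :
  eigenvalue A l -> eigenvalue A (lambda_min A).
Proof.
have p_neq0 : char_poly A != 0 := monic_neq0 (char_poly_monic A).
rewrite /lambda_min !eigenvalue_root_char => Al.
have : l \in rootsR (char_poly A) by rewrite -(roots_on_rootsR p_neq0) Al andbT.
case E: (rootsR _) => [|y ys] //= _.
have : y \in rootsR (char_poly A) by rewrite E mem_head.
by rewrite -(roots_on_rootsR p_neq0) => /andP [].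
Qed.

Section RealPartBound.
Variables (R : rcfType) (n : nat) (H : 'M[R[i]]_n) (c : R).
Local Open Scope complex_scope.
Hypotheses (c_gt0 : 0 < c) (H_herm : ctrmx H = H)
  (conjH_psd : psdmx (map_mx conjc H))
  (H_mul_conj : H *m map_mx conjc H = (c%:C ^+ 2)%:M).

Let Hb := map_mx conjc H.
Let cI : 'M[R[i]]_n := c%:C%:M.

Lemma conj_mul_H : Hb *m H = (c%:C ^+ 2)%:M.
Proof.
have HbK : map_mx conjc Hb = H by apply/matrixP=> i j; rewrite !mxE conjcK.
have := congr1 (map_mx conjc) H_mul_conj.
rewrite map_mxM HbK map_scalar_mx => ->.
by congr _%:M; rewrite rmorphXn; congr (_ ^+ 2); exact: conjc_real.
Qed.

Lemma shifted_conj_sandwich :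
  (H - cI) *m Hb *m (H - cI) = c%:C ^+ 2 *: (H + Hb) - (2 * c%:C ^+ 3)%:M.
Proof.
rewrite mulmxBl H_mul_conj mul_scalar_mx mulmxBr !mulmxBl mul_mx_scalar.
rewrite -scalemxAl conj_mul_H !mul_scalar_mx !mul_mx_scalar.
apply/matrixP=> i j; rewrite !mxE.
by case: (i == j); rewrite ?mulr1n ?mulr0n; ring.
Qed.

Lemma Re_mx_eigenvalue_ge l : eigenvalue (Re_mx H) l -> c <= l.
Proof.
move=> /eigenvalueP [v hv v_neq0].
pose vc := map_mx (real_complex R) v.
have hvc : vc *m map_mx (real_complex R) (Re_mx H) = l%:C *: vc.
  by rewrite -map_mxM hv map_mxZ.
have vv_gt0 : 0 < (vc *m ctrmx vc) 0 0.
  by rewrite lt_def dot_self_eq0 map_mx_eq0 v_neq0 dot_self_ge0.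
have := conjH_psd (vc *m (H - cI)).
have -> : vc *m (H - cI) *m Hb *m ctrmx (vc *m (H - cI))
    = vc *m ((H - cI) *m Hb *m (H - cI)) *m ctrmx vc.
  by rewrite ctrmxM ctrmxB H_herm ctrmx_real_scalar !mulmxA.
rewrite shifted_conj_sandwich addmx_conj scalerA mulmxBr -scalemxAr hvc.
rewrite mul_mx_scalar scalerA -scalerBl -scalemxAl mxE pmulr_lge0 //.
have -> : c%:C ^+ 2 * 2 * l%:C - 2 * c%:C ^+ 3 = (2 * c ^+ 2 * (l - c))%:C.
  by rewrite !(rmorphM (real_complex R)) (rmorphB (real_complex R))
    (rmorph_nat (real_complex R)); ring.
rewrite -(rmorph0 (real_complex R)) lecR pmulr_rge0 ?subr_ge0 //.
by rewrite mulr_gt0 // exprn_gt0.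
Qed.

End RealPartBound.

Section Mtilde.
Variables (R : rcfType) (mu : R).
Local Open Scope complex_scope.

Ltac mx2_entrywise :=
  apply/matrixP=> -[[|[|//]] ?] -[[|[|//]] ?];
  rewrite !mxE ?big_ord_recl ?big_ord0 ?mxE /=;
  apply/eqP; rewrite eq_complex /=; apply/andP; split; apply/eqP.

Lemma Mtilde_hermitian : ctrmx (Mtilde mu) = Mtilde mu.
Proof. by mx2_entrywise; ring. Qed.

Lemma Mtilde_mul_conj :
  Mtilde mu *m map_mx conjc (Mtilde mu) = (1 - mu ^+ 2)%:C%:M.
Proof. by mx2_entrywise; ring. Qed.

Lemma kron_pow_Mtilde_hermitian k :
  ctrmx (kron_pow (Mtilde mu) k) = kron_pow (Mtilde mu) k.
Proof. by rewrite ctrmx_kron_pow Mtilde_hermitian. Qed.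

Hypothesis mu_bound : -1 < mu < 1.
Let s := Num.sqrt (1 - mu ^+ 2).

Lemma sqrt_1_sub_sqr_gt0 : 0 < s.
Proof. by rewrite sqrtr_gt0; case/andP: mu_bound => *; nra. Qed.

Lemma sqr_sqrt_1_sub_sqr : s ^+ 2 = 1 - mu ^+ 2.
Proof. by rewrite sqr_sqrtr //; case/andP: mu_bound => *; nra. Qed.

Let chol : 'M[R[i]]_2 := \matrix_(a < 2, b < 2)
  (if a == 0 then (if b == 0 then 1 else - ('i * mu%:C)) else
   if b == 0 then 0 else s%:C).

Lemma conj_Mtilde_chol : map_mx conjc (Mtilde mu) = ctrmx chol *m chol.
Proof. by have s2 := sqr_sqrt_1_sub_sqr; rewrite /chol; mx2_entrywise; nra. Qed.

Lemma conj_kron_pow_Mtilde_psd k :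
  psdmx (map_mx conjc (kron_pow (Mtilde mu) k)).
Proof.
rewrite map_kron_pow conj_Mtilde_chol -kron_pow_mul -ctrmx_kron_pow.
exact: psdmx_gram.
Qed.

Lemma kron_pow_Mtilde_mul_conj k :
  kron_pow (Mtilde mu) k *m map_mx conjc (kron_pow (Mtilde mu) k)
  = ((s ^+ k)%:C ^+ 2)%:M.
Proof.
rewrite map_kron_pow kron_pow_mul Mtilde_mul_conj kron_pow_scalar.
by rewrite -!(rmorphXn (real_complex R)) -exprM mulnC exprM sqr_sqrt_1_sub_sqr.
Qed.

End Mtilde.

Theorem mainTheorem6 (R : rcfType) (mu : R) (hmu : -1 < mu < 1) (k : nat) :
  lambda_min (Re_mx (kron_pow (Mtilde mu) k)) >= (Num.sqrt (1 - mu ^+ 2)) ^+ k.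
Proof.
have H_herm := kron_pow_Mtilde_hermitian mu k.
have [l Al] := symmetric_eigenvalue_exists (expn_gt0 2 k) (Re_mx_sym H_herm).
apply: (Re_mx_eigenvalue_ge _ H_herm _ _ (lambda_min_eigenvalue Al)).
- exact/exprn_gt0/sqrt_1_sub_sqr_gt0.
- exact: conj_kron_pow_Mtilde_psd.
- exact: kron_pow_Mtilde_mul_conj.
Qed.
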